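(* Consider any JPLT-I protocol. For every realization $\mathrm{Q}$ of the query $Q$ occurring with positive probability and every $\tilde W\in\mathbb{W}$, there exists $\tilde V\in\mathbb{V}_I$ such that $H\big(Z^{[\tilde W,\tilde V]}\mid A,\,Q=\mathrm{Q}\big)=0$, i.e., conditioned on $Q=\mathrm{Q}$, the matrix $Z^{[\tilde W,\tilde V]}=\tilde V X_{\tilde W}$ is a deterministic function of the answer $A$.
   Context: Setup. Let $q$ be a prime power, $N\ge 1$ an integer, $B=N\log_2 q$, and $1\le L\le D\le K$ integers. Let $\mathbb{W}$ be the set of all $D$-element subsets of $[K]=\{1,\dots,K\}$. Let $\mathbb{V}_I$ be the set of $L\times D$ matrices over $\mathbb{F}_q$ that are MDS (every $L\times L$ submatrix is invertible), and $\mathbb{V}_{II}$ the set of $L\times D$ matrices over $\mathbb{F}_q$ of rank $L$. A server stores messages $X_1,\dots,X_K\in\mathbb{F}_q^N$ (row vectors), which are independent and uniformly distributed; $X$ denotes the $K\times N$ matrix with rows $X_1,\dots,X_K$, and for $S\subseteq[K]$, $X_S$ is the submatrix of rows indexed by $S$ (in increasing order). For $W\in\mathbb{W}$ and an $L\times D$ matrix $V$, the demand is $Z^{[W,V]}=VX_W=UX$, where the global coefficient matrix $U$ is the $L\times K$ matrix whose columns indexed by $W$ (in increasing order) are the columns of $V$ and whose other columns are zero. The demand support $W$ is uniform on $\mathbb{W}$; the coefficient matrix $V$ is uniform on $\mathbb{V}_I$ (Model I) or on $\mathbb{V}_{II}$ (Model II); $W,V,X$ are mutually independent. The server knows $K,D,L$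 and these distributions but not the realizations of $W,V$. Protocol. The user draws private randomness $R$ independent of $(W,V,X)$ and sends a query $Q=Q^{[W,V]}$ that is a function of $(W,V,R)$; the server returns an answer $A=A^{[W,V]}$ that is a deterministic function of $(Q,X)$. Recoverability: $H(Z^{[W,V]}\mid A,Q,W,V)=0$. Joint privacy: for every realization $\mathrm{Q}$ of the query with positive probability and every $\tilde W\in\mathbb{W}$, $\Pr(W=\tilde W\mid Q=\mathrm{Q})=1/\binom{K}{D}$. A JPLT-I (resp. JPLT-II) protocol is a protocol satisfying recoverability and joint privacy under Model I (resp. Model II). The rate of a protocol is $H(Z^{[W,V]})/H(A)=LB/H(A)$. *)

From HB Require Import structures.
From mathcomp Require Import all_boot all_order all_algebra all_field.
From mathcomp Require Import all_classical all_reals exp.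
Set Implicit Arguments. Unset Strict Implicit. Unset Printing Implicit Defensive.
Import Order.TTheory GRing.Theory Num.Theory.
Local Open Scope ring_scope.

Definition sorted_idx (n : nat) (S : {set 'I_n}) : seq nat :=
  sort leq [seq val k | k <- enum S].

(** Columns of A indexed by S, in increasing order (r = intended #|S|). *)
Definition colsub_set (R : nmodType) (m n r : nat) (A : 'M[R]_(m, n))
    (S : {set 'I_n}) : 'M[R]_(m, r) :=
  \matrix_(i < m, j < r) \sum_(k < n | val k == nth 0%N (sorted_idx S) j) A i k.

Definition rowsub_set (R : nmodType) (m n r : nat) (X : 'M[R]_(m, n))
    (S : {set 'I_m}) : 'M[R]_(r, n) :=
  \matrix_(j < r, c < n) \sum_(k < m | val k == nth 0%N (sorted_idx S) j) X k c.

Definition is_MDS (F : fieldType) (L D : nat) (V : 'M[F]_(L, D)) : bool :=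
  [forall S : {set 'I_D}, (#|S| == L) ==> (colsub_set L V S \in unitmx)].

Definition demand (F : fieldType) (K N L D : nat) (W : {set 'I_K})
    (V : 'M[F]_(L, D)) (X : 'M[F]_(K, N)) : 'M[F]_(L, N) :=
  V *m rowsub_set D X W.

Definition prob (R : realType) (Om : finType) (p : Om -> R) (E : Om -> bool) : R :=
  \sum_(w : Om) p w * (E w)%:R.

Definition condp (R : realType) (Om : finType) (p : Om -> R) (E : Om -> bool)
    : Om -> R := fun w => p w * (E w)%:R / prob p E.

(** Conditional entropy H(Z | Y) in bits:
    sum_{z,y} p(z,y) log2 (p(y) / p(z,y)), written as an expectation over Om. *)
Definition cond_entropy (R : realType) (Om : finType) (p : Om -> R)
    (TZ TY : eqType) (Z : Om -> TZ) (Y : Om -> TY) : R :=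
  \sum_(w : Om) p w *
     (ln (prob p (fun w' => Y w' == Y w) /
          prob p (fun w' => (Z w' == Z w) && (Y w' == Y w))) / ln 2).

Definition Omega (F : finFieldType) (K N L D : nat) (RT : finType) : finType :=
  ({set 'I_K} * 'M[F]_(L, D) * RT * 'M[F]_(K, N))%type.

Definition Wset (K D : nat) : {set {set 'I_K}} := [set S : {set 'I_K} | #|S| == D].

Definition VIset (F : finFieldType) (L D : nat) : {set 'M[F]_(L, D)} :=
  [set V : 'M[F]_(L, D) | is_MDS V].

(** Joint law of (W, V, R, X) in Model I: W uniform on Wset, V uniform on VIset,
    R with law pR, X uniform on F^{K x N}; mutually independent. *)
Definition jointI (R : realType) (F : finFieldType) (K N L D : nat) (RT : finType)
    (pR : RT -> R) (w : Omega F K N L D RT) : R :=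
  let: (W, V, r, X) := w in
  ((W \in Wset K D)%:R / #|Wset K D|%:R) *
  ((V \in VIset F L D)%:R / #|VIset F L D|%:R) *
  pR r * (1 / #|{: 'M[F]_(K, N)}|%:R).

Definition JPLT_I (R : realType) (F : finFieldType) (K N L D : nat) (RT : finType)
    (pR : RT -> R) (QT AT : eqType)
    (Qry : {set 'I_K} -> 'M[F]_(L, D) -> RT -> QT)
    (Ans : QT -> 'M[F]_(K, N) -> AT) : Prop :=
  let p := jointI pR in
  let Qv := fun w : Omega F K N L D RT => let: (W, V, r, X) := w in Qry W V r in
  let Av := fun w : Omega F K N L D RT => let: (_, _, _, X) := w in Ans (Qv w) X in
  let Wv := fun w : Omega F K N L D RT => let: (W, _, _, _) := w in W in
  let Vv := fun w : Omega F K N L D RT => let: (_, V, _, _) := w in V in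
  let Zv := fun w : Omega F K N L D RT => let: (W, V, _, X) := w in demand W V X in
  cond_entropy p Zv (fun w => (Av w, Qv w, Wv w, Vv w)) = 0 /\
  (forall Q0 : QT, prob p (fun w => Qv w == Q0) > 0 ->
     forall Wt : {set 'I_K}, #|Wt| = D ->
       prob (condp p (fun w => Qv w == Q0)) (fun w => Wv w == Wt)
       = 1 / ('C(K, D))%:R).

From HB Require Import structures.
From mathcomp Require Import all_boot all_order all_algebra all_field.
From mathcomp Require Import all_classical all_reals exp.
Set Implicit Arguments. Unset Strict Implicit. Unset Printing Implicit Defensive.
Import Order.TTheory GRing.Theory Num.Theory.
Local Open Scope ring_scope.

(* The proof has three independent ingredients.
   1. Finite probability: an event of positive probability contains a sample
      point of positive weight, and the support of p(. | E) lies in E.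
   2. Conditional entropy: for a nonnegative weight p, H(Z | Y) = 0 holds iff
      Z is determined by Y on the support of p ("determined_on p Z Y").  Each
      summand of H(Z | Y) is nonnegative, so H(Z | Y) = 0 forces
      P(Y = y) = P(Z = z, Y = y) on the support, i.e. no support point with
      Y = y has a different value of Z.
   3. The protocol: by joint privacy, P(W = Wt | Q = Q0) = 1/C(K,D) > 0, so
      some positive-weight sample point (Wt, Vt, r, X) produces the query Q0;
      Vt is MDS because it lies in the support of the Model I law.  For any
      two matrices X1, X2 giving the same answer to Q0, the sample points
      (Wt, Vt, r, X1) and (Wt, Vt, r, X2) have the same (A, Q, W, V), so
      recoverability forces Vt X1_Wt = Vt X2_Wt.  By 2, this is the claim. *)

Section FiniteProbability.
Variables (R : realType) (Om : finType) (p : Om -> R).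
Hypothesis p_ge0 : forall w, 0 <= p w.

Lemma weight_le0 w : p w <= 0 -> p w = 0.
Proof. by move=> pw; apply/eqP; rewrite eq_le pw p_ge0. Qed.

Lemma prob_ge0 (E : Om -> bool) : 0 <= prob p E.
Proof. by apply: sumr_ge0 => w _; rewrite mulr_ge0. Qed.

Lemma prob_mono (E1 E2 : Om -> bool) :
  (forall w, E1 w -> E2 w) -> prob p E1 <= prob p E2.
Proof.
move=> sub12; apply: ler_sum => w _; apply: ler_wpM2l => //.
by case E1w: (E1 w); rewrite ?(sub12 _ E1w) // ler_nat; case: (E2 w).
Qed.

Lemma prob_ge_point (E : Om -> bool) v : E v -> p v <= prob p E.
Proof.
move=> Ev; rewrite /prob (bigD1 v) //= Ev mulr1 lerDl.
by apply: sumr_ge0 => w _; rewrite mulr_ge0.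
Qed.

Lemma prob_neq0_witness (E : Om -> bool) :
  prob p E != 0 -> exists w, 0 < p w /\ E w.
Proof.
move=> PE; have [/existsP [w /andP [pw Ew]]|none] :=
  boolP [exists w, (0 < p w) && E w]; first by exists w.
move/negP: PE; elim; apply/eqP/big1 => w _; move/existsPn/(_ w): none.
rewrite negb_and -leNgt; case: (E w) => [|_]; last by rewrite mulr0.
by rewrite orbF mulr1 => /weight_le0 ->.
Qed.

Lemma prob_eq_subevent (E1 E2 : Om -> bool) :
  (forall w, E1 w -> E2 w) -> prob p E1 = prob p E2 ->
  forall w, 0 < p w -> E2 w -> E1 w.
Proof.
move=> sub12 eqP12 w pw E2w; apply: contraTT pw => E1w.
have diff_ge0 u : true -> 0 <= p u * (E2 u)%:R - p u * (E1 u)%:R.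
  move=> _; rewrite subr_ge0; apply: ler_wpM2l => //.
  by case E1u: (E1 u); rewrite ?(sub12 _ E1u) // ler_nat; case: (E2 u).
have sum0 : \sum_u (p u * (E2 u)%:R - p u * (E1 u)%:R) = 0.
  by rewrite sumrB -/(prob p E2) -/(prob p E1) eqP12 subrr.
have := psumr_eq0P diff_ge0 sum0 (i := w) isT.
by rewrite E2w (negbTE E1w) mulr1 mulr0 subr0 => ->; rewrite ltxx.
Qed.

Lemma condp_ge0 (E : Om -> bool) w : 0 <= condp p E w.
Proof. by rewrite /condp !mulr_ge0 ?ler0n ?invr_ge0 ?prob_ge0. Qed.

Lemma condp_support (E : Om -> bool) w : 0 < condp p E w -> 0 < p w /\ E w.
Proof.
rewrite /condp; case: (E w); last by rewrite mulr0 mul0r ltxx.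
rewrite mulr1 => pos; split=> //; rewrite lt_neqAle p_ge0 andbT.
by apply: contraTneq pos => <-; rewrite mul0r ltxx.
Qed.
End FiniteProbability.

Section ConditionalEntropy.
Variables (R : realType) (Om : finType) (p : Om -> R).
Hypothesis p_ge0 : forall w, 0 <= p w.
Variables (TZ TY : eqType) (Z : Om -> TZ) (Y : Om -> TY).

Definition determined_on : Prop :=
  forall w w', 0 < p w -> 0 < p w' -> Y w = Y w' -> Z w = Z w'.

Let PY w := prob p (fun w' => Y w' == Y w).
Let PZY w := prob p (fun w' => (Z w' == Z w) && (Y w' == Y w)).

Lemma PZY_le_PY w : PZY w <= PY w.
Proof. by apply: prob_mono => // u /andP[]. Qed.

Lemma PZY_gt0 w : 0 < p w -> 0 < PZY w.
Proof. by move=> pw; apply: (lt_le_trans pw); apply: prob_ge_point; rewrite ?eqxx. Qed.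

Lemma ln2_gt0 : 0 < ln (2 : R).
Proof. by rewrite ln_gt0 // ltr1n. Qed.

Lemma cond_entropy_term_ge0 w : 0 <= p w * (ln (PY w / PZY w) / ln 2).
Proof.
have [pw|] := ltP 0 (p w); last first.
  by move/(weight_le0 p_ge0)->; rewrite mul0r.
apply: mulr_ge0; first exact: ltW.
apply: divr_ge0; last exact: ltW ln2_gt0.
apply: ln_ge0.
by rewrite ler_pdivlMr ?PZY_gt0 // mul1r PZY_le_PY.
Qed.

Lemma cond_entropy_term_eq0 w : 0 < p w ->
  p w * (ln (PY w / PZY w) / ln 2) = 0 -> PZY w = PY w.
Proof.
move=> pw /eqP; rewrite mulf_eq0 (gt_eqF pw) mulf_eq0 invr_eq0.
rewrite (gt_eqF ln2_gt0) orbF.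
have PZYpos := PZY_gt0 pw.
rewrite ln_eq0 ?divr_gt0 ?(lt_le_trans PZYpos (PZY_le_PY w)) // => /eqP ratio1.
by rewrite -[PY w](divfK (lt0r_neq0 PZYpos)) ratio1 mul1r.
Qed.

Lemma cond_entropy_eq0_determined : cond_entropy p Z Y = 0 -> determined_on.
Proof.
move=> H0 w w' pw pw' Yww'.
have term0 := psumr_eq0P (fun v _ => cond_entropy_term_ge0 v) H0 (i := w) isT.
have sameP := cond_entropy_term_eq0 pw term0.
have sub u : (Z u == Z w) && (Y u == Y w) -> Y u == Y w by case/andP.
have := prob_eq_subevent p_ge0 sub sameP pw'.
by rewrite Yww' eqxx andbT => /(_ isT) /eqP.
Qed.

Lemma determined_cond_entropy_eq0 : determined_on -> cond_entropy p Z Y = 0.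
Proof.
move=> det; apply: big1 => w _.
have [pw|pw] := ltP 0 (p w); last first.
  by rewrite (weight_le0 p_ge0 pw) mul0r.
rewrite -/(PY w) -/(PZY w).
suff -> : PY w = PZY w by rewrite divff ?(gt_eqF (PZY_gt0 pw)) // ln1 mul0r mulr0.
apply: eq_bigr => u _.
have [pu|pu] := ltP 0 (p u); last first.
  by rewrite (weight_le0 p_ge0 pu) !mul0r.
by case: eqP => Yu; rewrite ?andbF // (det u w) ?eqxx.
Qed.
End ConditionalEntropy.

Section ModelI.
Variables (R : realType) (F : finFieldType) (K N L D : nat) (RT : finType).
Variable (pR : RT -> R).
Hypothesis pR_ge0 : forall r, 0 <= pR r.

Lemma jointI_ge0 (w : Omega F K N L D RT) : 0 <= jointI pR w.
Proof.
case: w => [[[W V] r] X] /=.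
by rewrite !mulr_ge0 ?divr_ge0 ?pR_ge0 ?invr_ge0 ?ler0n ?ler01.
Qed.

Lemma jointI_support (W : {set 'I_K}) (V : 'M[F]_(L, D)) r (X : 'M[F]_(K, N)) :
  0 < jointI pR (W, V, r, X) ->
  [/\ W \in Wset K D, V \in VIset F L D & 0 < pR r].
Proof.
rewrite /=; case: (W \in Wset K D); last by rewrite !mul0r ltxx.
case: (V \in VIset F L D); last by rewrite mul0r mulr0 !mul0r ltxx.
move=> pos; split=> //; rewrite lt_neqAle pR_ge0 andbT.
by apply: contraTneq pos => <-; rewrite mulr0 mul0r ltxx.
Qed.

Lemma jointI_gt0 (W : {set 'I_K}) (V : 'M[F]_(L, D)) r (X : 'M[F]_(K, N)) :
  W \in Wset K D -> V \in VIset F L D -> 0 < pR r ->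
  0 < jointI pR (W, V, r, X).
Proof.
move=> hW hV hr; rewrite /= hW hV !mul1r.
have cW : (0 < #|Wset K D|)%N by apply/card_gt0P; exists W.
have cV : (0 < #|VIset F L D|)%N by apply/card_gt0P; exists V.
have cM : (0 < #|{: 'M[F]_(K, N)}|)%N by apply/card_gt0P; exists 0.
by rewrite !mulr_gt0 // invr_gt0 ltr0n.
Qed.
End ModelI.

Theorem lemma1 (R : realType) (F : finFieldType) (K N L D : nat)
    (RT : finType) (pR : RT -> R) (QT AT : eqType)
    (Qry : {set 'I_K} -> 'M[F]_(L, D) -> RT -> QT)
    (Ans : QT -> 'M[F]_(K, N) -> AT) :
  (1 <= N)%N -> (1 <= L)%N -> (L <= D)%N -> (D <= K)%N ->
  (forall r, 0 <= pR r) -> \sum_(r : RT) pR r = 1 ->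
  JPLT_I pR Qry Ans ->
  let p := jointI pR in
  let Qv := fun w : Omega F K N L D RT => let: (W, V, r, X) := w in Qry W V r in
  let Av := fun w : Omega F K N L D RT => let: (_, _, _, X) := w in Ans (Qv w) X in
  forall Q0 : QT, prob p (fun w => Qv w == Q0) > 0 ->
  forall Wt : {set 'I_K}, #|Wt| = D ->
  exists Vt : 'M[F]_(L, D), is_MDS Vt /\
    cond_entropy (condp p (fun w => Qv w == Q0))
      (fun w : Omega F K N L D RT => let: (_, _, _, X) := w in demand Wt Vt X)
      Av = 0.
Proof.
move=> _ _ _ hDK pR_ge0 _ [recover privacy] p Qv Av Q0 hQ0 Wt hWt.
have p_ge0 : forall w, 0 <= p w := jointI_ge0 pR_ge0.
have condQ_ge0 := condp_ge0 p_ge0 (fun w => Qv w == Q0).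
(* Joint privacy makes the support Wt compatible with the query Q0. *)
have Wt_possible : prob (condp p (fun w => Qv w == Q0))
    (fun w => (let: (W, _, _, _) := w in W) == Wt) != 0.
  by rewrite privacy // div1r invr_eq0 pnatr_eq0 -lt0n bin_gt0.
have [[[[W Vt] r] X] [pos_cond /eqP eW]] := prob_neq0_witness condQ_ge0 Wt_possible.
subst W; have [pos /eqP /= QVt] := condp_support p_ge0 pos_cond.
have [WtD VtMDS pRr] := jointI_support pR_ge0 (X := X) pos.
exists Vt; split; first by move: VtMDS; rewrite inE.
apply: determined_cond_entropy_eq0 => // -[[[W1 V1] r1] X1] [[[W2 V2] r2] X2].
move=> /(condp_support p_ge0) [_ /eqP Q1] /(condp_support p_ge0) [_ /eqP Q2].
move: Q1 Q2 => /= Q1 Q2; rewrite /Av /Qv /= Q1 Q2 => sameA.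
have := cond_entropy_eq0_determined p_ge0 recover
  (jointI_gt0 X1 WtD VtMDS pRr) (jointI_gt0 X2 WtD VtMDS pRr).
by apply; rewrite /= QVt sameA.
Qed.
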